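(* Let $a_1\ge1$ and $n \ge 3$ be integers, and suppose that $p$ is an odd primitive divisor of $\ell_n$ with $(D \mid p) = 1$. Then there exists $\bm{x} \in \mathcal{L}(f)$ such that $\tau(\bm{x}; p) = \rho(\bm{x}; p) = 2n$ and $x_j \not\equiv 0 \pmod p$ for all $j \ge 0$. Moreover, if $n$ is odd, then there exists $\bm{y} \in \mathcal{L}(f)$ such that $\tau(\bm{y}; p) = \rho(\bm{y}; p) = n$ and $y_j \not\equiv 0 \pmod p$ for all $j\ge0$.
   Context: Let $f := X^2 - a_1X - 1$, $D := a_1^2+4$, and $\alpha,\beta$ the roots of $f$ ($\alpha\beta=-1$, $\alpha+\beta=a_1$). $\mathcal{L}(f)$ is the set of integer sequences $\bm{x}=(x_n)_{n\ge0}$ with $x_{n+2} = a_1x_{n+1} + x_n$ for all $n\ge0$. For an integer $m\ge1$, $\tau(\bm{x}; m)$ is the minimal integer $t \ge 1$ with $x_{n+t}\equiv x_n \pmod m$ for all sufficiently large $n$, and $\rho(\bm{x};m) := \#\{x_n \bmod m : n\ge 0\}$. The Lehmer sequence is $\ell_n := \frac{\alpha^n - (-\beta)^n}{\alpha + \beta}$ for odd $n$ and $\ell_n := \frac{\alpha^n - (-\beta)^n}{\alpha^2 - \beta^2}$ for even $n$ (integers). A prime $p$ is a primitive divisor of $\ell_n$ if $p \mid \ell_n$ but $p \nmid (\alpha^2-\beta^2)^2\ell_1\cdots\ell_{n-1}$, where $(\alpha^2-\beta^2)^2 = a_1^2D$. $(D\mid p)$ is the Legendre symbol. *)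

From HB Require Import structures.
From mathcomp Require Import all_boot all_order all_algebra all_field.
Set Implicit Arguments. Unset Strict Implicit. Unset Printing Implicit Defensive.
Import Order.TTheory GRing.Theory Num.Theory.
Local Open Scope ring_scope.

(* f = X^2 - a1 X - 1, D = a1^2 + 4 (as an integer). *)
Definition discr (a1 : int) : int := a1 ^+ 2 + 4.

Definition inL (a1 : int) (x : nat -> int) : Prop :=
  forall k : nat, x k.+2 = a1 * x k.+1 + x k.

Definition ev_period_mod (x : nat -> int) (m : int) (t : nat) : Prop :=
  exists N : nat, forall k : nat, (N <= k)%N -> (x (k + t)%N == x k %[mod m])%Z.

Definition is_tau (x : nat -> int) (m : int) (t : nat) : Prop :=
  [/\ (0 < t)%N, ev_period_mod x m t &
      forall s : nat, (0 < s)%N -> ev_period_mod x m s -> (t <= s)%N].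

Definition is_rho (x : nat -> int) (m : int) (r : nat) : Prop :=
  exists s : seq int, [/\ uniq s, size s = r &
      forall z : int, z \in s <-> exists k : nat, z = (x k %% m)%Z].

Definition alphaC (a1 : int) : algC := (a1%:~R + sqrtC (discr a1)%:~R) / 2.
Definition betaC (a1 : int) : algC := (a1%:~R - sqrtC (discr a1)%:~R) / 2.

Definition lehmer (a1 : int) (k : nat) : algC :=
  let a := alphaC a1 in let b := betaC a1 in
  if odd k then (a ^+ k - (- b) ^+ k) / (a + b)
  else (a ^+ k - (- b) ^+ k) / (a ^+ 2 - b ^+ 2).

Definition primitive_divisor (a1 : int) (p : nat) (k : nat) : Prop :=
  let a := alphaC a1 in let b := betaC a1 in
  (p%:R %| lehmer a1 k)%C /\
  ~ (p%:R %| (a ^+ 2 - b ^+ 2) ^+ 2 * \prod_(1 <= i < k) lehmer a1 i)%C.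

Definition legendre_is_one (d : int) (p : nat) : Prop :=
  ~ (p%:Z %| d)%Z /\ exists y : int, (y ^+ 2 == d %[mod p%:Z])%Z.

From HB Require Import structures.
From mathcomp Require Import all_boot all_order all_algebra all_field.
From mathcomp Require Import ring zify.
Import Order.TTheory GRing.Theory Num.Theory.
Set Implicit Arguments. Unset Strict Implicit. Unset Printing Implicit Defensive.
Local Open Scope ring_scope.

(* Reduce mod p.  Since (D | p) = 1, f splits over F_p with roots al, be, al be = -1.
   With N_k = al^k - (-be)^k one has N_k = 0 iff al^(2k) = 1, and N_k is the image
   of the Lehmer number l_k times a nonzero factor; as p is a primitive divisor of
   l_n, al^2 (and hence be^2 = al^-2) has multiplicative order exactly n.  Each
   root r then has r^n = 1 or r^n = -1, i.e. order n or 2n.  For even n,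
   r^n = (r^2)^(n/2) <> 1, so both roots have order 2n; for odd n, (al be)^n = -1
   makes exactly one of al^n, be^n equal to 1.  The integer sequence x_0 = 1,
   x_1 = r (lifted), x_(k+2) = a1 x_(k+1) + x_k reduces to r^k, hence its period and
   its number of residues are the order of r, and it never vanishes mod p. *)

Lemma min_order_prim_root (R : nzRingType) (z : R) n : (0 < n)%N -> z ^+ n = 1 ->
  (forall k, (0 < k < n)%N -> z ^+ k != 1) -> n.-primitive_root z.
Proof.
move=> n_gt0 zn1 zk_neq1; have [m prim_m m_dvd_n] := prim_order_exists n_gt0 zn1.
have m_gt0 := prim_order_gt0 prim_m.
suff /eqP <- : m == n by [].
rewrite eqn_leq dvdn_leq //= leqNgt; apply/negP => m_lt_n.
by have := zk_neq1 m; rewrite m_gt0 m_lt_n (prim_expr_order prim_m) eqxx => /(_ isT).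
Qed.

Lemma prim_root_mul_eq1 (R : comNzRingType) n (u v : R) :
  u * v = 1 -> n.-primitive_root u -> n.-primitive_root v.
Proof.
move=> uv1 prim_u.
apply: min_order_prim_root (prim_order_gt0 prim_u) _ _ => [|k /andP[k_gt0 k_lt_n]].
  by rewrite -[LHS]mul1r -{1}(prim_expr_order prim_u) -exprMn uv1 expr1n.
apply: contraTneq (k_lt_n) => vk1.
have : (n %| k)%N.
  by rewrite (prim_order_dvd prim_u) -[u ^+ k]mulr1 -{1}vk1 -exprMn uv1 expr1n.
by move/(dvdn_leq k_gt0); rewrite leqNgt.
Qed.

Section SquarePrimRoot.
Variables (R : idomainType) (n : nat) (z : R).
Hypothesis prim_z2 : n.-primitive_root (z ^+ 2).

Lemma prim_root_sqr_expr_sign : z ^+ n = 1 \/ z ^+ n = -1.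
Proof.
have : (z ^+ n) ^+ 2 == 1 by rewrite -exprM mulnC exprM (prim_expr_order prim_z2).
by rewrite sqrf_eq1 => /orP[/eqP|/eqP]; [left | right].
Qed.

Lemma prim_root_sqr_dvd k : z ^+ k = 1 -> (n %| k)%N.
Proof.
by move=> zk1; rewrite (prim_order_dvd prim_z2) -exprM mulnC exprM zk1 expr1n.
Qed.

Lemma prim_root_sqr1 : z ^+ n = 1 -> n.-primitive_root z.
Proof.
move=> zn1; apply: min_order_prim_root (prim_order_gt0 prim_z2) zn1 _.
move=> k /andP[k_gt0 k_lt_n]; apply/negP => /eqP/prim_root_sqr_dvd/(dvdn_leq k_gt0).
by rewrite leqNgt k_lt_n.
Qed.

Lemma prim_root_sqrN1 : 2 != 0 :> R -> z ^+ n = -1 -> (2 * n)%N.-primitive_root z.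
Proof.
move=> two_neq0 znN1; have n_gt0 := prim_order_gt0 prim_z2.
apply: min_order_prim_root => [||k /andP[k_gt0 k_lt_2n]].
- by rewrite muln_gt0.
- by rewrite mulnC exprM znN1 sqrrN expr1n.
apply/negP => /eqP zk1; have /dvdnP[q def_k] := prim_root_sqr_dvd zk1.
move: k_gt0 k_lt_2n zk1; rewrite def_k muln_gt0 ltn_pmul2r // => /andP[q_gt0 _] q_lt2.
have -> : q = 1%N by lia.
by rewrite mul1n znN1 => /eqP; rewrite eq_sym -addr_eq0 -mulr2n (negbTE two_neq0).
Qed.

End SquarePrimRoot.

Lemma prim_root_sqr_pair (R : idomainType) (x y : R) n :
    2 != 0 :> R -> x * y = -1 -> n.-primitive_root (x ^+ 2) ->
  (exists2 r, r \in [:: x; y] & (2 * n)%N.-primitive_root r) /\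
  (odd n -> exists2 r, r \in [:: x; y] & n.-primitive_root r).
Proof.
move=> two_neq0 xy prim_x2.
have prim_y2 : n.-primitive_root (y ^+ 2).
  by apply: prim_root_mul_eq1 prim_x2; rewrite -exprMn xy sqrrN expr1n.
have xyn : x ^+ n * y ^+ n = (-1) ^+ n by rewrite -exprMn xy.
have x_in : x \in [:: x; y] by rewrite mem_head.
have y_in : y \in [:: x; y] by rewrite !inE eqxx orbT.
have [xn1 | xnN1] := prim_root_sqr_expr_sign prim_x2; last first.
  split; first by exists x; last exact: prim_root_sqrN1.
  move=> n_odd; exists y => //; apply: prim_root_sqr1 => //.
  by move: xyn; rewrite xnN1 -signr_odd n_odd mulN1r expr1 => /oppr_inj.
have n_odd : odd n.
  apply: contraT => n_even; set m := n./2.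
  have def_n : n = (2 * m)%N by rewrite -[LHS]odd_double_half (negbTE n_even) mul2n.
  have : (n %| m)%N by rewrite (prim_order_dvd prim_x2) -exprM -def_n xn1.
  have := prim_order_gt0 prim_x2; rewrite def_n => n_gt0 /dvdn_leq; lia.
split=> [|_]; last by exists x; last exact: prim_root_sqr1.
exists y => //; apply: prim_root_sqrN1 => //.
by move: xyn; rewrite xn1 mul1r -signr_odd n_odd.
Qed.

(* Integer model of the Lehmer sequence: from N_(k+2) = (al - be) N_(k+1) - N_k and
   (al - be)^2 = D one gets l_(k+2) = c_k l_(k+1) - l_k, with c_k = D for odd k and
   c_k = 1 for even k. *)
Fixpoint lehmerZ (D : int) (k : nat) : int :=
  match k with
  | 0 => 0
  | 1 => 1
  | (k'.+1 as k1).+1 => (if odd k' then D else 1) * lehmerZ D k1 - lehmerZ D k'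
  end.

Lemma lehmer_numerator (R : comNzRingType) (a : int) (al be : R) :
    al * be = -1 -> al + be = a%:~R ->
  forall k, al ^+ k - (- be) ^+ k =
    (lehmerZ (discr a) k)%:~R * (if odd k then al + be else al ^+ 2 - be ^+ 2).
Proof.
move=> albe alDbe; have D_sqr : (al - be) ^+ 2 = (discr a)%:~R.
  by rewrite /discr intrD rmorphXn /= -alDbe; ring: albe.
have numer_rec k : al ^+ k.+2 - (- be) ^+ k.+2 =
    (al - be) * (al ^+ k.+1 - (- be) ^+ k.+1) - (al ^+ k - (- be) ^+ k).
  by rewrite !exprS; ring: albe.
elim/ltn_ind => -[|[|k]] IH.
- by rewrite !expr0 subrr mul0r.
- by rewrite !expr1 opprK mul1r.
rewrite numer_rec (IH k.+1) // (IH k) ?(leqnSn k.+1) //= intrB intrM.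
case: (odd k) => /=; last by ring.
by rewrite -D_sqr; ring.
Qed.

Lemma lehmer_denominator_neq0 (R : idomainType) (al be : R) k :
  al + be != 0 -> al - be != 0 ->
  (if odd k then al + be else al ^+ 2 - be ^+ 2) != 0.
Proof.
move=> alDbe alBbe; case: (odd k) => //.
by rewrite (_ : al ^+ 2 - be ^+ 2 = (al + be) * (al - be)) ?mulf_neq0 //; ring.
Qed.

Lemma lehmerZ_eq0 (R : idomainType) (a : int) (al be : R) k :
    al * be = -1 -> al + be = a%:~R -> a%:~R != 0 :> R -> al - be != 0 ->
  ((lehmerZ (discr a) k)%:~R == 0 :> R) = (al ^+ (2 * k) == 1).
Proof.
move=> albe alDbe a_neq0 alBbe.
have alDbe_neq0 : al + be != 0 by rewrite alDbe.
have den_neq0 := lehmer_denominator_neq0 k alDbe_neq0 alBbe.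
rewrite -[LHS]orbF -(negbTE den_neq0) -mulf_eq0 -(lehmer_numerator albe alDbe).
have unit_k : al ^+ k * (- be) ^+ k = 1 by rewrite -exprMn mulrN albe opprK expr1n.
rewrite subr_eq0 mul2n -addnn exprD.
apply/eqP/eqP => [alk | al2k]; first by rewrite {2}alk.
by rewrite -[LHS]mulr1 -unit_k mulrA al2k mul1r.
Qed.

Lemma lehmer_rank_prim_root (R : idomainType) (a : int) (al be : R) n :
    al * be = -1 -> al + be = a%:~R -> a%:~R != 0 :> R -> al - be != 0 ->
    (0 < n)%N -> (lehmerZ (discr a) n)%:~R = 0 :> R ->
    (forall k, (0 < k < n)%N -> (lehmerZ (discr a) k)%:~R != 0 :> R) ->
  n.-primitive_root (al ^+ 2).
Proof.
move=> albe alDbe a_neq0 alBbe n_gt0 Ln0 Lk_neq0.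
have Z k := lehmerZ_eq0 k albe alDbe a_neq0 alBbe.
apply: min_order_prim_root n_gt0 _ _ => [|k k_range].
  by apply/eqP; rewrite -exprM -Z Ln0.
by rewrite -exprM -Z Lk_neq0.
Qed.

Fixpoint recseq (a u v : int) (k : nat) : int :=
  match k with
  | 0 => u
  | 1 => v
  | (k'.+1 as k1).+1 => a * recseq a u v k1 + recseq a u v k'
  end.

Section PrimeField.
Variable p : nat.
Hypothesis p_pr : prime p.
Local Notation F := 'F_p.

Lemma dvdz_Fp (z : int) : (p%:Z %| z)%Z = (z%:~R == 0 :> F).
Proof. exact: (dvdz_pcharf (pchar_Fp p_pr)). Qed.

Lemma eqz_mod_Fp (u v : int) : (u == v %[mod p%:Z])%Z = (u%:~R == v%:~R :> F).
Proof. by rewrite eqz_mod_dvd dvdz_Fp rmorphB /= subr_eq0. Qed.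

Lemma two_neq0_Fp : odd p -> 2 != 0 :> F.
Proof.
move=> p_odd; rewrite -(dvdn_pcharf (pchar_Fp p_pr)) dvdn_prime2 //.
by apply: contraL p_odd => /eqP->.
Qed.

(* The roots are (a +- c) / 2, where c^2 = D mod p. *)
Lemma legendre_roots_Fp (a : int) : odd p -> legendre_is_one (discr a) p ->
  exists al be : F, [/\ al * be = -1, al + be = a%:~R & al - be != 0].
Proof.
move=> p_odd [D_ndvd [y y2D]]; have two_neq0 := two_neq0_Fp p_odd.
set c : F := y%:~R; set a' : F := a%:~R.
have c2 : c ^+ 2 = a' ^+ 2 + 4.
  by move: y2D; rewrite eqz_mod_Fp /discr intrD !rmorphXn => /eqP.
have c_neq0 : c != 0.
  apply/eqP => c0; apply: D_ndvd; move: y2D.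
  by rewrite dvdz_Fp eqz_mod_Fp rmorphXn /= -/c c0 expr0n eq_sym.
have four_neq0 : 4 != 0 :> F by rewrite (_ : 4 = 2 * 2 :> F) ?mulf_neq0 //; ring.
exists ((a' + c) / 2), ((a' - c) / 2); split.
- transitivity ((a' ^+ 2 - c ^+ 2) / 4); first by field; rewrite four_neq0.
  by rewrite c2 opprD addrA subrr sub0r mulNr divff.
- by field.
- by rewrite (_ : _ - _ = c) //; field.
Qed.

Lemma recseq_Fp_expr (a : int) (h : F) : h ^+ 2 = a%:~R * h + 1 ->
  forall k, (recseq a 1 (h : nat)%:Z k)%:~R = h ^+ k.
Proof.
move=> h2; elim/ltn_ind => -[|[|k]] IH /=.
- by rewrite expr0.
- by rewrite expr1; exact: natr_Zp.
by rewrite intrD intrM (IH k.+1) // (IH k) ?(leqnSn k.+1) // !exprS; ring: h2.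
Qed.

Section GeometricSequence.
Variables (x : nat -> int) (h : F) (T : nat).
Hypotheses (prim_h : T.-primitive_root h) (xE : forall k, (x k)%:~R = h ^+ k).

Lemma eqz_mod_prim_root i j : (x i == x j %[mod p%:Z])%Z = (i == j %[mod T]).
Proof. by rewrite eqz_mod_Fp !xE (eq_prim_root_expr prim_h). Qed.

Lemma is_tau_prim_root : is_tau x p%:Z T.
Proof.
split=> [|| s s_gt0 [N periodic]]; first exact: prim_order_gt0 prim_h.
  by exists 0%N => k _; rewrite eqz_mod_prim_root modnDr.
apply: dvdn_leq s_gt0 _; move: (periodic N (leqnn N)).
by rewrite eqz_mod_prim_root -{2}(addn0 N) eqn_modDl mod0n.
Qed.

Lemma is_rho_prim_root : is_rho x p%:Z T.
Proof.
exists [seq (x k %% p%:Z)%Z | k <- iota 0 T]; split.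
- rewrite map_inj_in_uniq ?iota_uniq // => i j; rewrite !mem_iota !add0n.
  move=> /andP[_ i_lt_T] /andP[_ j_lt_T] /eqP.
  by rewrite -/(_ == _ %[mod _])%Z eqz_mod_prim_root !modn_small // => /eqP.
- by rewrite size_map size_iota.
move=> z; split=> [/mapP[k _ ->] | [k ->]]; first by exists k.
apply/mapP; exists (k %% T)%N.
  by rewrite mem_iota add0n ltn_mod (prim_order_gt0 prim_h).
by apply/eqP; rewrite -/(_ == _ %[mod _])%Z eqz_mod_prim_root modn_mod.
Qed.

Lemma prim_root_seq_ndvd j : ~~ (p%:Z %| x j)%Z.
Proof.
by rewrite dvdz_Fp xE expf_neq0 // (prim_root_eq0 prim_h) -lt0n (prim_order_gt0 prim_h).
Qed.

End GeometricSequence.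

Lemma recseq_prim_root (a : int) (h : F) T :
    h ^+ 2 = a%:~R * h + 1 -> T.-primitive_root h ->
  exists x : nat -> int, [/\ inL a x, is_tau x p%:Z T, is_rho x p%:Z T &
    forall j, ~~ (p%:Z %| x j)%Z].
Proof.
move=> h2 prim_h; have xE := recseq_Fp_expr h2.
exists (recseq a 1 (h : nat)%:Z); split.
- by move=> k.
- exact: is_tau_prim_root prim_h xE.
- exact: is_rho_prim_root prim_h xE.
- exact: prim_root_seq_ndvd prim_h xE.
Qed.

End PrimeField.

Lemma discr_gt0 (a : int) : 0 < discr a.
Proof. by rewrite /discr ltr_wpDl ?sqr_ge0. Qed.

Section ComplexRoots.
Variable a1 : int.
Local Notation al := (alphaC a1).
Local Notation be := (betaC a1).
Local Notation s := (sqrtC ((discr a1)%:~R : algC)).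

Lemma alphaC_add_betaC : al + be = a1%:~R.
Proof. by rewrite /alphaC /betaC; field. Qed.

Lemma alphaC_sub_betaC : al - be = s.
Proof. by rewrite /alphaC /betaC; field. Qed.

Lemma alphaC_mul_betaC : al * be = -1.
Proof.
transitivity ((a1%:~R ^+ 2 - s ^+ 2) / 4 : algC).
  by rewrite /alphaC /betaC; field.
rewrite sqrtCK /discr intrD rmorphXn opprD addrA subrr sub0r mulNr.
by rewrite divff // pnatr_eq0.
Qed.

Lemma sqrtC_discr_neq0 : s != 0.
Proof. by rewrite sqrtC_eq0 intr_eq0 gt_eqF ?discr_gt0. Qed.

Lemma lehmerE k : a1 != 0 -> lehmer a1 k = (lehmerZ (discr a1) k)%:~R.
Proof.
move=> a1_neq0; have alDbe_neq0 : al + be != 0 by rewrite alphaC_add_betaC intr_eq0.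
have alBbe_neq0 : al - be != 0 by rewrite alphaC_sub_betaC sqrtC_discr_neq0.
have := lehmer_numerator alphaC_mul_betaC alphaC_add_betaC k.
have := lehmer_denominator_neq0 k alDbe_neq0 alBbe_neq0.
by rewrite /lehmer; case: (odd k) => /= den_neq0 ->; rewrite mulfK.
Qed.

Lemma sqr_alphaC_subr_sqr : (al ^+ 2 - be ^+ 2) ^+ 2 = (a1 ^+ 2 * discr a1)%:~R.
Proof.
rewrite (_ : al ^+ 2 - be ^+ 2 = (al + be) * (al - be)); last by ring.
by rewrite alphaC_add_betaC alphaC_sub_betaC exprMn sqrtCK intrM rmorphXn.
Qed.

End ComplexRoots.

Lemma dvdC_intr (p : nat) (z : int) : (p%:R %| (z%:~R : algC))%C = (p%:Z %| z)%Z.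
Proof. by rewrite dvdC_int ?intr_int // intrKfloor dvdzE. Qed.

Lemma primitive_divisor_lehmerZ (a1 : int) (p n : nat) :
    a1 != 0 -> prime p -> primitive_divisor a1 p n ->
  [/\ (p%:Z %| lehmerZ (discr a1) n)%Z, ~~ (p%:Z %| a1)%Z &
      forall k, (0 < k < n)%N -> ~~ (p%:Z %| lehmerZ (discr a1) k)%Z].
Proof.
move=> a1_neq0 p_pr [p_dvd_ln p_ndvd].
have [a1_neq0_Fp prod_neq0] : (a1%:~R : 'F_p) != 0 /\
    \prod_(1 <= i < n) ((lehmerZ (discr a1) i)%:~R : 'F_p) != 0.
  move: p_ndvd; rewrite /= sqr_alphaC_subr_sqr.
  rewrite (eq_bigr (fun i => (lehmerZ (discr a1) i)%:~R)); last first.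
    by move=> i _; rewrite lehmerE.
  rewrite -rmorph_prod -intrM dvdC_intr (dvdz_Fp p_pr).
  rewrite rmorphM rmorph_prod rmorphM rmorphXn /=.
  by move/negP; rewrite !mulf_eq0 !negb_or => /andP[/andP[/andP[-> _] _] ->].
split.
- by rewrite -dvdC_intr -lehmerE.
- by rewrite (dvdz_Fp p_pr).
move=> k /andP[k_gt0 k_lt_n]; rewrite (dvdz_Fp p_pr).
move: prod_neq0; rewrite prodf_seq_neq0 => /allP/(_ k).
by rewrite mem_index_iota k_gt0 k_lt_n; apply.
Qed.

Theorem mainTheorem11 (a1 : int) (n p : nat) :
  1 <= a1 -> (3 <= n)%N -> prime p -> odd p ->
  primitive_divisor a1 p n -> legendre_is_one (discr a1) p ->
  (exists x : nat -> int, [/\ inL a1 x, is_tau x p%:Z (2 * n)%N,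
      is_rho x p%:Z (2 * n)%N & forall j : nat, ~~ (p%:Z %| x j)%Z]) /\
  (odd n -> exists y : nat -> int, [/\ inL a1 y, is_tau y p%:Z n,
      is_rho y p%:Z n & forall j : nat, ~~ (p%:Z %| y j)%Z]).
Proof.
move=> a1_ge1 n_ge3 p_pr p_odd pdiv legD.
have a1_neq0 : a1 != 0 by rewrite gt_eqF // (lt_le_trans ltr01).
have [p_dvd_ln p_ndvd_a1 p_ndvd_lk] := primitive_divisor_lehmerZ a1_neq0 p_pr pdiv.
have [al [be [albe alDbe alBbe]]] := legendre_roots_Fp p_pr p_odd legD.
have prim_al2 : n.-primitive_root (al ^+ 2).
  apply: (lehmer_rank_prim_root albe alDbe _ alBbe) => [||| k /p_ndvd_lk].
  - by rewrite -(dvdz_Fp p_pr).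
  - exact: leq_trans n_ge3.
  - by apply/eqP; rewrite -(dvdz_Fp p_pr).
  - by rewrite (dvdz_Fp p_pr).
have root_f r : r \in [:: al; be] -> r ^+ 2 = a1%:~R * r + 1.
  by rewrite -alDbe -[1]opprK -albe !inE => /orP[]/eqP->; ring.
have [[r r_in prim_r] odd_root] :=
  prim_root_sqr_pair (two_neq0_Fp p_pr p_odd) albe prim_al2.
split; first exact: (recseq_prim_root p_pr (root_f r r_in) prim_r).
move=> /odd_root[s s_in prim_s].
exact: (recseq_prim_root p_pr (root_f s s_in) prim_s).
Qed.
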